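(* Let $A$ be a circular $m\times n$ matrix with no dominating rows, and let $\Gamma$ be a circuit of $F(A)$ with winding number $p$ and $s$ essential bullets $1\le b_1<b_2<\dots<b_s\le n$. Then $\Gamma$ has exactly $s$ row arcs, and each row arc of $\Gamma$ jumps over exactly $p$ essential bullets of $\Gamma$, i.e., it has the form $(B_i^-,B_{i+p}^+)$ for some $i\in[s]$ (block indices modulo $s$). Moreover, $\gcd(s,p)=1$.
   Context: Notation: $[n]=\{1,\dots,n\}$ with addition mod $n$ (index $0$ identified with $n$); for $a,c\in[n]$ with $t\ge0$ minimal such that $a+t\equiv c\pmod n$, $[a,c]_n=\{a,\dots,a+t\}$ (mod $n$), $[a,c)_n=[a,c]_n\setminus\{c\}$. An $m\times n$ $\{0,1\}$-matrix $A=(a_{ij})$ is circular if for each row $i$ there are $\ell_i\in[n]$ and an integer $2\le k_i\le n-1$ with row $i$ the incidence vector of $[\ell_i,\ell_i+k_i)_n$. Row $i$ dominates row $\ell\ne i$ if $a_{ij}\ge a_{\ell j}$ for all $j$. $F(A)$: digraph on $[n]$ (labels mod $n$) with row arcs $a_i=(\ell_i-1,\ell_i+k_i-1)$ ($i\in[m]$, length $k_i$), forward short arcs $(j-1,j)$ (length $1$), reverse short arcs $(j,j-1)$ (length $-1$). A circuit is a simple directed circuit; winding number $p(\Gamma)$: $p(\Gamma)n=$ sum of its arc lengths. A row arc $a_i$ jumps over $j$ iff $j\in[\ell_i,\ell_i+k_i)_n$. For a circuit $\Gamma$: $\circ(\Gamma)=\{j:(j-1,j)\in E(\Gamma)\}$,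 $\otimes(\Gamma)=\{j:(j,j-1)\in E(\Gamma)\}$, $\bullet(\Gamma)=[n]\setminus(\circ(\Gamma)\cup\otimes(\Gamma))$; essential bullets are bullets that are nodes of $\Gamma$. Blocks: with essential bullets $b_1<\dots<b_s$ (indices mod $s$), for $j\in[s]$ define $v_j\in[b_j,b_{j+1})_n$: if $b_j+1\in\circ(\Gamma)$, $v_j$ is such that $[b_j+1,v_j]_n\subseteq\circ(\Gamma)$ and $v_j+1\notin\circ(\Gamma)$; if $b_j+1\in\otimes(\Gamma)$, $[b_j+1,v_j]_n\subseteq\otimes(\Gamma)$ and $v_j+1\notin\otimes(\Gamma)$; if $b_j+1\in\bullet(\Gamma)$, $v_j=b_j$. $B_j=[b_j,v_j]_n$ is a circle/cross/bullet block according as $b_j+1$ is a circle/cross/bullet. Set $B_j^-=b_j$, $B_j^+=v_j$ for a cross block; $B_j^-=v_j$, $B_j^+=b_j$ for a circle block; $B_j^-=B_j^+=b_j$ for a bullet block. *)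

From mathcomp Require Import all_boot all_order all_algebra.
Set Implicit Arguments. Unset Strict Implicit. Unset Printing Implicit Defensive.
Import GRing.Theory Num.Theory.

(* Conventions: the labels [n] = {1,...,n} (mod n) are represented by the
   ordinals 'I_n, label x corresponding to the ordinal (x mod n); in
   particular label n is the ordinal 0.  Columns of the matrix use the same
   identification. *)

Definition nadd n (a : 'I_n) (t : nat) : 'I_n :=
  Ordinal (ltn_pmod (a + t) (leq_ltn_trans (leq0n a) (ltn_ord a))).
Definition nsucc n (a : 'I_n) : 'I_n := nadd a 1.
Definition npred n (a : 'I_n) : 'I_n := nadd a n.-1.

(* [a, c]_n : { a, ..., a + t } with t minimal such that a + t = c mod n *)
Definition cint_cc n (a c j : 'I_n) : bool :=
  (j + n - a) %% n <= (c + n - a) %% n.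
Definition cint_co n (a c j : 'I_n) : bool := cint_cc a c j && (j != c).

Definition dominates m n (A : 'M[nat]_(m, n)) (i i' : 'I_m) : Prop :=
  forall j, A i' j <= A i j.

(* arcs of F(A): inl i = row arc a_i ; inr (inl j) = forward short arc
   (j-1, j) ; inr (inr j) = reverse short arc (j, j-1). *)
Definition arcT m n := ('I_m + ('I_n + 'I_n))%type.
Definition rowA m n (i : 'I_m) : arcT m n := inl i.
Definition fwdA m n (j : 'I_n) : arcT m n := inr (inl j).
Definition revA m n (j : 'I_n) : arcT m n := inr (inr j).

Section F.
Variables (m n : nat) (l : 'I_m -> 'I_n) (k : 'I_m -> nat).

Definition atail (e : arcT m n) : 'I_n :=
  match e with
  | inl i => npred (l i)
  | inr (inl j) => npred j
  | inr (inr j) => j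
  end.
Definition ahead (e : arcT m n) : 'I_n :=
  match e with
  | inl i => npred (nadd (l i) (k i))
  | inr (inl j) => j
  | inr (inr j) => npred j
  end.
Definition alen (e : arcT m n) : int :=
  match e with
  | inl i => (k i)%:Z
  | inr (inl _) => 1%R
  | inr (inr _) => (-1)%R
  end.
Definition is_row (e : arcT m n) : bool := if e is inl _ then true else false.

Definition is_circuit (c : seq (arcT m n)) : bool :=
  [&& c != [::], cycle (fun e f => ahead e == atail f) c & uniq (map atail c)].

Definition jumps (i : 'I_m) (j : 'I_n) : bool := cint_co (l i) (nadd (l i) (k i)) j.

Variable c : seq (arcT m n).

Definition circ (j : 'I_n) : bool := fwdA m j \in c.
Definition cross (j : 'I_n) : bool := revA m j \in c.
Definition bullet (j : 'I_n) : bool := ~~ circ j && ~~ cross j.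
Definition essential (j : 'I_n) : bool := bullet j && (j \in map atail c).

(* essential bullets b_1 < ... < b_s in label order 1 < 2 < ... < n *)
Definition ebul : seq 'I_n := [seq j <- rot 1 (enum 'I_n) | essential j].
Definition nbul : nat := size ebul.

(* v such that [b+1, v] is a maximal run of P starting at b+1 *)
Definition run_end (P : pred 'I_n) (b : 'I_n) : 'I_n :=
  nadd b (1 + find (fun u => ~~ P (nadd b u.+2)) (iota 0 n)).
Definition blockV (b : 'I_n) : 'I_n :=
  if circ (nsucc b) then run_end circ b
  else if cross (nsucc b) then run_end cross b
  else b.
Definition Bminus (b : 'I_n) : 'I_n := if circ (nsucc b) then blockV b else b.
Definition Bplus (b : 'I_n) : 'I_n := if circ (nsucc b) then b else blockV b.

End F.

(* For a column t let J(t) be the number of row arcs of the circuit jumping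
   over t, and circ(t), cross(t), ess(t) the 0/1 indicators of circles,
   crosses and essential bullets.  Flow conservation at the nodes shows that
   J(t) + circ(t) - cross(t) does not depend on t, hence equals the winding
   number p, and gives the balance
     circ(t+1) + #(row tails at t) = ess(t) + circ(t),
   which telescopes to #(row arcs) = #(essential bullets) = s.
   Non-domination rules out nested row arcs, so the row arcs jumping over the
   last column of a row arc a are a itself and those starting strictly inside
   a; telescoping the balance over the columns of a then shows that a jumps
   over exactly p essential bullets.  The same balance forces the tail of a
   to close a run of circles opened at the preceding essential bullet (a B^-)
   and its head to close a run of crosses (a B^+), and these two blocks are p
   essential bullets apart.  Finally the number of essential bullets up to t,
   taken modulo gcd(s, p), is invariant along every arc of the circuit,
   whereas consecutive essential bullets have counts 1 and 2; hence
   gcd(s, p) = 1 (when s = 0 there are no row arcs and p = 1 or -1). *)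

From mathcomp Require Import all_boot all_order all_algebra zify.
Import GRing.Theory Num.Theory.
Set Implicit Arguments. Unset Strict Implicit. Unset Printing Implicit Defensive.

Section CyclicLabels.
Variable n : nat.
Implicit Types a b t : 'I_n.

Lemma ord_n_gt0 a : 0 < n.
Proof. exact: leq_ltn_trans (leq0n a) (ltn_ord a). Qed.

Definition cdist a b : nat := (b + n - a) %% n.

Lemma cdist_lt a b : cdist a b < n.
Proof. by rewrite ltn_mod (ord_n_gt0 a). Qed.

Lemma naddA a d1 d2 : nadd (nadd a d1) d2 = nadd a (d1 + d2).
Proof. by apply: val_inj; rewrite /= modnDml addnA. Qed.

Lemma nadd0 a : nadd a 0 = a.
Proof. by apply: val_inj; rewrite /= addn0 modn_small. Qed.

Lemma naddn a : nadd a n = a.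
Proof. by apply: val_inj; rewrite /= modnDr modn_small. Qed.

Lemma nadd_modn a d : nadd a (d %% n) = nadd a d.
Proof. by apply: val_inj; rewrite /= modnDmr. Qed.

Lemma nadd_cdist a b : nadd a (cdist a b) = b.
Proof.
apply: val_inj; rewrite /= /cdist modnDmr.
have Ha := ltn_ord a; have Hb := ltn_ord b.
by rewrite addnC subnK ?modnDr ?modn_small //; lia.
Qed.

Lemma cdist_nadd a d : cdist a (nadd a d) = d %% n.
Proof.
have Ha := ltn_ord a.
rewrite /cdist /= -addnBA; last lia.
rewrite modnDml.
have -> : a + d + (n - a) = d + n by lia.
by rewrite modnDr.
Qed.

Lemma eq_nadd_cdist a b d : d < n -> (b == nadd a d) = (cdist a b == d).
Proof.
move=> Hd; apply/eqP/eqP => [->|<-]; first by rewrite cdist_nadd modn_small.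
by rewrite nadd_cdist.
Qed.

Lemma cdistnn a : cdist a a = 0.
Proof. by rewrite -{2}(nadd0 a) cdist_nadd mod0n. Qed.

(* Going from [a] to [t] through [b] winds around the cycle at most once. *)
Lemma cdist_trans a b t :
  cdist a t = cdist a b + cdist b t \/ cdist a t + n = cdist a b + cdist b t.
Proof.
have -> : cdist a t = (cdist a b + cdist b t) %% n.
  by rewrite -{1}(nadd_cdist b t) -{1}(nadd_cdist a b) naddA cdist_nadd.
have := cdist_lt a b; have := cdist_lt b t.
case: (ltnP (cdist a b + cdist b t) n) => H *; first by left; rewrite modn_small.
right; rewrite -{1}(subnK H) modnDr modn_small; lia.
Qed.

Lemma nadd_inj a : injective (fun d : 'I_n => nadd a d).
Proof.
by move=> d1 d2 /(congr1 (cdist a)); rewrite !cdist_nadd !modn_small // => /val_inj.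
Qed.

Lemma nsuccK : cancel (@nsucc n) (@npred n).
Proof.
move=> a; have := ord_n_gt0 a => Hn.
by rewrite /npred /nsucc naddA add1n prednK // naddn.
Qed.

Lemma npredK : cancel (@npred n) (@nsucc n).
Proof.
move=> a; have := ord_n_gt0 a => Hn.
by rewrite /npred /nsucc naddA addn1 prednK // naddn.
Qed.

Lemma npred_eq a b : (npred a == b) = (a == nsucc b).
Proof. by apply/eqP/eqP => [<-|->]; rewrite ?npredK ?nsuccK. Qed.

Lemma nadd_succ a d : nadd a d.+1 = nsucc (nadd a d).
Proof. by rewrite /nsucc naddA addn1. Qed.

Lemma cdist_nsucc a t : cdist a (nsucc t) = (cdist a t).+1 %% n.
Proof. by rewrite -{1}(nadd_cdist a t) -nadd_succ cdist_nadd. Qed.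

Lemma cint_coE a d t : d < n -> cint_co a (nadd a d) t = (cdist a t < d).
Proof.
move=> Hd; rewrite /cint_co /cint_cc -/(cdist a t) -/(cdist a (nadd a d)).
by rewrite cdist_nadd modn_small // (eq_nadd_cdist _ _ Hd) ltn_neqAle andbC.
Qed.

Lemma big_nadd (R : Type) (idx : R) (op : Monoid.com_law idx) a (G : 'I_n -> R) :
  \big[op/idx]_(t : 'I_n) G t = \big[op/idx]_(d < n) G (nadd a d).
Proof. by rewrite (reindex_inj (@nadd_inj a)). Qed.

Lemma telescope_nadd (f g h : 'I_n -> nat) :
  (forall t, f (nsucc t) + g t = h t + f t) ->
  forall a K, f (nadd a K) + \sum_(d < K) g (nadd a d) = \sum_(d < K) h (nadd a d) + f a.
Proof.
move=> Hfgh a; elim=> [|K IH]; first by rewrite !big_ord0 nadd0 addn0.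
rewrite (big_ord_recr K (fun d => g (nadd a d))) (big_ord_recr K (fun d => h (nadd a d))).
rewrite /= nadd_succ; move: IH.
set Sg := \sum_(d < K) g _; set Sh := \sum_(d < K) h _.
have := Hfgh (nadd a K); lia.
Qed.

Lemma card_window a (P : pred 'I_n) K : K <= n ->
  #|[pred j | P j && (cdist a j < K)]| = \sum_(d < K) P (nadd a d).
Proof.
move=> HK; rewrite -sum1_card big_mkcond (big_nadd _ a) /=.
rewrite (big_ord_widen n (fun d => P (nadd a d) : nat)) // [RHS]big_mkcond.
apply: eq_bigr => d _; rewrite inE cdist_nadd modn_small //.
by case: (P _); case: (d < K).
Qed.

Lemma sum_cdist_lt a K : K <= n -> \sum_(t : 'I_n) (cdist a t < K : nat) = K.
Proof.
move=> HK; rewrite (big_nadd _ a).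
rewrite (eq_bigr (fun d : 'I_n => (d < K) : nat)); last first.
  by move=> d _; rewrite cdist_nadd modn_small.
by rewrite -big_mkcond /= -(big_ord_widen n (fun _ => 1)) // sum1_card card_ord.
Qed.

Lemma sum_ord_eq1 (j : 'I_n) : \sum_(t : 'I_n) ((t == j) : nat) = 1.
Proof. by rewrite -big_mkcond /= big_pred1_eq. Qed.

End CyclicLabels.

Lemma count_sumE (T : Type) (P : pred T) (s : seq T) : count P s = \sum_(x <- s) P x.
Proof. by rewrite -sum1_count big_mkcond. Qed.

Lemma count_addE3 (T : Type) (P P1 P2 P3 : pred T) (s : seq T) :
  (forall x, P x = P1 x + P2 x + P3 x :> nat) ->
  count P s = count P1 s + count P2 s + count P3 s.
Proof. by move=> HP; elim: s => //= x s ->; rewrite HP; lia. Qed.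

Lemma count_add_eq (T : Type) (P Q P' Q' : pred T) (s : seq T) :
  (forall x, P x + Q x = P' x + Q' x :> nat) ->
  count P s + count Q s = count P' s + count Q' s.
Proof. by move=> HP; elim: s => //= x s; have := HP x; lia. Qed.

Lemma count_addE_in (T : eqType) (P P1 P2 : pred T) (s : seq T) :
  {in s, forall x, P x = P1 x + P2 x :> nat} ->
  count P s = count P1 s + count P2 s.
Proof.
elim: s => //= x s IH HP; rewrite HP ?mem_head // IH; first lia.
by move=> y Hy; apply: HP; rewrite inE Hy orbT.
Qed.

Lemma sum_ord_eqn (x K : nat) : \sum_(d < K) ((x == d) : nat) = (x < K).
Proof.
elim: K => [|K IH]; first by rewrite big_ord0.
by rewrite big_ord_recr /= IH ltnS leq_eqVlt; case: ltngtP => //=; lia.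
Qed.

Lemma uniq_map_inj_in (T U : eqType) (f : T -> U) (s : seq T) :
  uniq (map f s) -> {in s &, injective f}.
Proof.
elim: s => //= x s IH /andP [Hx Us] y z; rewrite !inE.
case/orP=> [/eqP ->|Hy] /orP [/eqP ->|Hz] // E; last exact: IH.
- by move: Hx; rewrite E map_f.
- by move: Hx; rewrite -E map_f.
Qed.

Lemma path_map_belast (T : Type) (U : eqType) (hd tl : T -> U) x s :
  path (fun a b => hd a == tl b) x s -> map hd (belast x s) = map tl s.
Proof. by elim: s x => //= y s IH x /andP [/eqP -> /IH ->]. Qed.

Lemma constant_rot1 (T : eqType) (s : seq T) : rot 1 s = s -> constant s.
Proof.
case: s => // x s; rewrite rot1_cons /=.
by elim: s => //= y s IH [-> Es]; rewrite eqxx IH.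
Qed.

Lemma nth_filter_iota (P : pred nat) N q : q < N -> P q ->
  nth 0 (filter P (iota 0 N)) (count P (iota 0 q)) = q.
Proof.
move=> Hq Pq; have -> : N = q + (1 + (N - q.+1)) by lia.
by rewrite iotaD filter_cat nth_cat size_filter ltnn subnn iotaD /= add0n Pq.
Qed.

Lemma nth_filter_iotaP (P : pred nat) N t : t < count P (iota 0 N) ->
  let q := nth 0 (filter P (iota 0 N)) t in [/\ q < N, P q & count P (iota 0 q) = t].
Proof.
elim: N t => // N IH t; rewrite -[N.+1]addn1 iotaD count_cat filter_cat /= add0n addn0.
case PN: (P N) => /=; last by rewrite cats0 addn0 => /IH [*]; split => //; lia.
rewrite nth_cat size_filter; case: (ltnP t (count P (iota 0 N))) => Ht.
  by move=> _; have [*] := IH t Ht; split => //; lia.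
move=> Ht2; have E : t = count P (iota 0 N) by lia.
by rewrite E subnn /=; split => //; lia.
Qed.

Lemma find_iota (P : pred nat) N j : j < N -> P j -> (forall u, u < j -> ~~ P u) ->
  find P (iota 0 N) = j.
Proof.
move=> Hj Pj Hu; have -> : N = j + (1 + (N - j.+1)) by lia.
rewrite iotaD find_cat size_iota iotaD /= add0n Pj addn0.
by rewrite ifF //; apply/hasP => -[u]; rewrite mem_iota => /andP [_ /Hu /negPf ->].
Qed.

Section PeriodicCount.
Variables (N : nat) (P : pred nat).
Hypothesis P_periodic : forall q, P (q + N) = P q.

Lemma count_iota_shift a : count P (iota a N) = count P (iota 0 N).
Proof.
elim: a => // a <-; case: N P_periodic => // N' HP.
rewrite -[in LHS](addn1 N') iotaD count_cat /= addSnnS HP; lia.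
Qed.

Lemma count_iota_periodic a j :
  count P (iota 0 (a + j * N)) = count P (iota 0 a) + j * count P (iota 0 N).
Proof.
elim: j => [|j IH]; first by rewrite !mul0n !addn0.
have -> : a + j.+1 * N = a + j * N + N by rewrite mulSn; lia.
by rewrite iotaD count_cat IH count_iota_shift mulSn; lia.
Qed.

End PeriodicCount.

Lemma fwdA_eq m n (j t : 'I_n) : (fwdA m j == fwdA m t) = (j == t).
Proof. by apply/eqP/eqP => [[]|->]. Qed.

Lemma revA_eq m n (j t : 'I_n) : (revA m j == revA m t) = (j == t).
Proof. by apply/eqP/eqP => [[]|->]. Qed.

Section CircuitBalance.
Variables (m n : nat) (l : 'I_m -> 'I_n) (k : 'I_m -> nat) (c : seq (arcT m n)).
Hypothesis c_circuit : is_circuit l k c.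
Hypothesis no_digon : forall j, ~~ (circ c j && cross c j).

Local Notation atl := (atail l).
Local Notation ahd := (ahead l k).
Local Notation ess := (essential l c).

Definition is_node (t : 'I_n) : bool := t \in map atl c.
Definition row_tails (t : 'I_n) : nat := count (fun e => is_row e && (atl e == t)) c.
Definition row_heads (t : 'I_n) : nat := count (fun e => is_row e && (ahd e == t)) c.

Lemma circuit_neq0 : c != [::].
Proof. by case/and3P: c_circuit. Qed.

Lemma circuit_n_gt0 : 0 < n.
Proof. by case/and3P: c_circuit; case: c => // e _ _ _ _; apply: ord_n_gt0 (atl e). Qed.

Lemma circuit_uniq_tails : uniq (map atl c).
Proof. by case/and3P: c_circuit. Qed.

Lemma circuit_uniq : uniq c.
Proof. exact: map_uniq circuit_uniq_tails. Qed.

Lemma circuit_heads : map ahd c = rot 1 (map atl c).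
Proof.
case/and3P: c_circuit; case: c => // e s _ c_cycle _.
have := path_map_belast c_cycle.
by rewrite belast_rcons map_rcons /= rot1_cons.
Qed.

Lemma count_arc (e : arcT m n) : count (pred1 e) c = (e \in c).
Proof. exact: count_uniq_mem circuit_uniq. Qed.

Lemma count_tail t : count (fun e => atl e == t) c = is_node t.
Proof.
rewrite /is_node -(count_uniq_mem _ circuit_uniq_tails) count_map.
by apply: eq_count => e /=; rewrite eq_sym.
Qed.

Lemma count_head t : count (fun e => ahd e == t) c = is_node t.
Proof.
rewrite /is_node -(count_uniq_mem _ circuit_uniq_tails).
have /permP <- : perm_eq (map ahd c) (map atl c) by rewrite circuit_heads perm_rot.
by rewrite count_map; apply: eq_count => e /=; rewrite eq_sym.
Qed.

Lemma node_out_degree t : is_node t = circ c (nsucc t) + cross c t + row_tails t :> nat.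
Proof.
rewrite -count_tail /circ /cross -!count_arc /row_tails.
apply: count_addE3 => -[i|[j|j]] //=.
- by rewrite fwdA_eq npred_eq !addn0.
- by rewrite revA_eq add0n addn0.
Qed.

Lemma node_in_degree t : is_node t = circ c t + cross c (nsucc t) + row_heads t :> nat.
Proof.
rewrite -count_head /circ /cross -!count_arc /row_heads.
apply: count_addE3 => -[i|[j|j]] //=.
- by rewrite fwdA_eq !addn0.
- by rewrite revA_eq npred_eq add0n addn0.
Qed.

Lemma node_le1 t : is_node t <= 1.
Proof. by case: (is_node t). Qed.

Lemma node_ess_circ_cross t : ess t + circ c t + cross c t = is_node t :> nat.
Proof.
have := node_out_degree t; have := node_in_degree t; have := no_digon t.
rewrite /essential /bullet -/(is_node t).
by case: (circ c t); case: (cross c t); case: (is_node t) => //=; lia.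
Qed.

Lemma circ_flow t : circ c (nsucc t) + row_tails t = ess t + circ c t :> nat.
Proof. by have := node_out_degree t; have := node_ess_circ_cross t; lia. Qed.

Lemma cross_flow t : cross c (nsucc t) + row_heads t = ess t + cross c t :> nat.
Proof. by have := node_in_degree t; have := node_ess_circ_cross t; lia. Qed.

Lemma circuit_arc_invariant (T : eqType) (f : 'I_n -> T) :
  (forall e, e \in c -> f (ahd e) = f (atl e)) -> {in map atl c &, forall x y, f x = f y}.
Proof.
move=> Hf x y Hx Hy; have : constant (map f (map atl c)).
  apply: constant_rot1; rewrite -map_rot -circuit_heads -!map_comp.
  by apply/eq_in_map => e /Hf.
move/(constantP (f x)) => [z Ez]; have := map_f f Hx; have := map_f f Hy.
by rewrite Ez !mem_nseq => /andP [_ /eqP ->] /andP [_ /eqP ->].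
Qed.

End CircuitBalance.

Section RowArcGeometry.
Variables (m n : nat) (l : 'I_m -> 'I_n) (k : 'I_m -> nat).
Hypothesis k_range : forall i, 2 <= k i <= n.-1.

Local Notation atl := (atail l).
Local Notation ahd := (ahead l k).

Definition arc_jumps (e : arcT m n) (t : 'I_n) : bool :=
  if e is inl i then jumps l k i t else false.

Lemma k_lt_n i : k i < n.
Proof. by have := k_range i; have := ord_n_gt0 (l i); lia. Qed.

Lemma jumpsE i t : jumps l k i t = (cdist (l i) t < k i).
Proof. by rewrite /jumps cint_coE // k_lt_n. Qed.

Lemma atail_rowE i t : (atl (inl i) == t) = (cdist (l i) t == n.-1).
Proof. by have Hn := ord_n_gt0 (l i); rewrite /= eq_sym eq_nadd_cdist //; lia. Qed.

Lemma ahead_rowE i t : (ahd (inl i) == t) = (cdist (l i) t == (k i).-1).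
Proof.
have := ord_n_gt0 (l i); have := k_range i => Hki Hn.
rewrite /= /npred naddA -nadd_modn.
have -> : k i + n.-1 = (k i).-1 + n by lia.
by rewrite modnDr nadd_modn eq_sym eq_nadd_cdist //; lia.
Qed.

Lemma arc_jumps_flow e t :
  arc_jumps e (nsucc t) + (is_row e && (ahd e == t)) =
  arc_jumps e t + (is_row e && (atl e == t)) :> nat.
Proof.
case: e => [i|[j|j]] //=; rewrite !jumpsE atail_rowE ahead_rowE cdist_nsucc.
move: (cdist (l i) t) (cdist_lt (l i) t) (k_range i) => x Hx HK.
case: (ltnP x.+1 n) => Hx1; last have -> : x.+1 = n by lia.
  by rewrite modn_small //; case: ltnP; case: ltnP; case: eqP; case: eqP => //=; lia.
by rewrite modnn; case: ltnP; case: ltnP; case: eqP; case: eqP => //=; lia.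
Qed.

End RowArcGeometry.

Section Winding.
Variables (m n : nat) (l : 'I_m -> 'I_n) (k : 'I_m -> nat) (c : seq (arcT m n)).
Hypothesis k_range : forall i, 2 <= k i <= n.-1.
Hypothesis c_circuit : is_circuit l k c.
Hypothesis no_digon : forall j, ~~ (circ c j && cross c j).

Definition njumps (t : 'I_n) : nat := count (arc_jumps l k ^~ t) c.

Lemma njumps_flow t : njumps (nsucc t) + row_heads l k c t = njumps t + row_tails l c t.
Proof. exact: count_add_eq (arc_jumps_flow l k_range ^~ t). Qed.

Lemma njumps_circ_cross_nadd a d :
  njumps (nadd a d) + circ c (nadd a d) + cross c a =
  njumps a + circ c a + cross c (nadd a d).
Proof.
elim: d => [|d IH]; first by rewrite nadd0.
rewrite nadd_succ; have := njumps_flow (nadd a d).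
have := circ_flow c_circuit no_digon (nadd a d).
have := cross_flow c_circuit no_digon (nadd a d); lia.
Qed.

Definition pos_len (e : arcT m n) : nat :=
  match e with inl i => k i | inr (inl _) => 1 | inr (inr _) => 0 end.
Definition neg_len (e : arcT m n) : nat :=
  match e with inr (inr _) => 1 | _ => 0 end.

Lemma sum_alen :
  (\sum_(e <- c) alen k e = (\sum_(e <- c) pos_len e)%:Z - (\sum_(e <- c) neg_len e)%:Z)%R.
Proof.
elim: c => [|e s IH]; first by rewrite !big_nil.
by rewrite !big_cons IH; case: e => [i|[j|j]] /=; lia.
Qed.

Lemma sum_njumps_circ : \sum_(t : 'I_n) (njumps t + circ c t) = \sum_(e <- c) pos_len e.
Proof.
rewrite (eq_bigr (fun t => \sum_(e <- c) (arc_jumps l k e t + (e == fwdA m t) : nat))); last first.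
  by move=> t _; rewrite /njumps /circ -(count_arc c_circuit) !count_sumE -big_split.
rewrite exchange_big /=; apply: eq_bigr => -[i|[j|j]] _ /=.
- under eq_bigr => t _ do rewrite addn0 (jumpsE l k_range).
  exact/sum_cdist_lt/ltnW/(k_lt_n l k_range).
- by rewrite -[RHS](sum_ord_eq1 j); apply: eq_bigr => t _; rewrite add0n fwdA_eq eq_sym.
- by rewrite big1.
Qed.

Lemma sum_cross : \sum_(t : 'I_n) (cross c t : nat) = \sum_(e <- c) neg_len e.
Proof.
rewrite (eq_bigr (fun t => \sum_(e <- c) ((e == revA m t) : nat))); last first.
  by move=> t _; rewrite /cross -(count_arc c_circuit) count_sumE.
rewrite exchange_big /=; apply: eq_bigr => -[i|[j|j]] _ /=; try by rewrite big1.
by rewrite -[RHS](sum_ord_eq1 j); apply: eq_bigr => t _; rewrite revA_eq eq_sym.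
Qed.

(* By [njumps_circ_cross_nadd] the left-hand side does not depend on [t];
   summed over all columns it is the total length of the circuit. *)
Lemma njumps_winding (p : int) : (p * Posz n = \sum_(e <- c) alen k e)%R ->
  forall t, ((njumps t)%:Z + (circ c t)%:Z - (cross c t)%:Z = p)%R.
Proof.
move=> Hp t; have Hn := ord_n_gt0 t.
have S : \sum_(u : 'I_n) (njumps u + circ c u + cross c t) =
         \sum_(u : 'I_n) (njumps t + circ c t + cross c u).
  by apply: eq_bigr => u _; rewrite -(nadd_cdist t u) njumps_circ_cross_nadd.
rewrite big_split /= sum_njumps_circ sum_nat_const card_ord in S.
rewrite big_split /= sum_nat_const card_ord sum_cross in S.
rewrite sum_alen in Hp; apply/esym/(@mulIf _ (Posz n)); lia.
Qed.

End Winding.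

Section EssentialRanks.
Variables (m n : nat) (l : 'I_m -> 'I_n) (c : seq (arcT m n)).
Hypothesis n_gt0 : 0 < n.

Local Notation ess := (essential l c).

(* [ebul] lists the essential bullets in the label order 1 < 2 < ... < n,
   i.e. starting at the ordinal 1, so positions [lpos] are measured from
   [label1]. *)
Definition label1 : 'I_n := nsucc (Ordinal n_gt0).
Definition ess_pos (q : nat) : bool := ess (nadd label1 q).
Definition lpos (t : 'I_n) : nat := cdist label1 t.
Definition ess_rank (t : 'I_n) : nat := count ess_pos (iota 0 (lpos t)).
Definition ess_upto (t : 'I_n) : nat := count ess_pos (iota 0 (lpos t).+1).

Lemma rot1_enum_ord : rot 1 (enum 'I_n) = map (nadd label1) (iota 0 n).
Proof.
apply: (inj_map val_inj); rewrite map_rot val_enum_ord -map_comp.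
rewrite (eq_map (g := fun q => (q + 1) %% n)); last first.
  by move=> q; rewrite /= modnDml add0n addnC.
case: n n_gt0 => // n' _; rewrite -[in RHS](addn1 n') iotaD map_cat /= addn1 modnn.
rewrite rot1_cons -cats1 (iotaDl 1 0); congr (_ ++ _).
by apply/eq_in_map => q; rewrite mem_iota add0n => /andP [_ Hq]; rewrite addn1 modn_small.
Qed.

Lemma ess_pos_periodic q : ess_pos (q + n) = ess_pos q.
Proof. by rewrite /ess_pos -nadd_modn modnDr nadd_modn. Qed.

Lemma ebulE : ebul l c = map (nadd label1) (filter ess_pos (iota 0 n)).
Proof. by rewrite /ebul rot1_enum_ord filter_map. Qed.

Lemma nbulE : nbul l c = count ess_pos (iota 0 n).
Proof. by rewrite /nbul ebulE size_map size_filter. Qed.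

Lemma ess_pos_lpos t : ess_pos (lpos t) = ess t.
Proof. by rewrite /ess_pos /lpos nadd_cdist. Qed.

Lemma ess_uptoE t : ess_upto t = ess_rank t + ess t.
Proof. by rewrite /ess_upto -addn1 iotaD count_cat /= ess_pos_lpos addn0. Qed.

Lemma ess_rank_lt b : ess b -> ess_rank b < nbul l c.
Proof.
move=> Hb; rewrite nbulE /ess_rank.
have Hp : lpos b < n := cdist_lt label1 b.
have -> : n = lpos b + (1 + (n - (lpos b).+1)) by lia.
by rewrite iotaD count_cat iotaD /= ess_pos_lpos Hb; lia.
Qed.

Lemma nth_ebul_rank x0 b : ess b -> nth x0 (ebul l c) (ess_rank b) = b.
Proof.
move=> Hb; rewrite ebulE (nth_map 0); last by rewrite size_filter -nbulE ess_rank_lt.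
by rewrite nth_filter_iota ?cdist_lt ?ess_pos_lpos // nadd_cdist.
Qed.

Lemma nth_ebulP x0 t : t < nbul l c ->
  exists b, [/\ ess b, ess_rank b = t & nth x0 (ebul l c) t = b].
Proof.
move=> Ht; have [] := nth_filter_iotaP (leq_trans Ht (eq_leq nbulE)).
set q := nth 0 _ t => Hq Eq Cq; exists (nadd label1 q).
have Pq : lpos (nadd label1 q) = q by rewrite /lpos cdist_nadd modn_small.
split; first by rewrite -ess_pos_lpos Pq.
  by rewrite /ess_rank Pq.
by rewrite ebulE (nth_map 0) // size_filter -nbulE.
Qed.

Definition ess_window (t : 'I_n) (d : nat) : nat :=
  count (fun u => ess (nadd t u)) (iota 1 d).

Lemma ess_upto_nadd t d :
  ess_upto (nadd t d) + (lpos t + d) %/ n * nbul l c = ess_upto t + ess_window t d.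
Proof.
rewrite /ess_upto.
have -> : ess_window t d = count ess_pos (iota (lpos t).+1 d).
  rewrite /ess_window -[(lpos t).+1]addn1 (iotaDl (lpos t) 1) count_map.
  by apply: eq_count => u /=; rewrite /ess_pos -naddA /lpos nadd_cdist.
have -> : lpos (nadd t d) = (lpos t + d) %% n.
  by rewrite /lpos -{1}(nadd_cdist label1 t) naddA cdist_nadd.
rewrite -count_cat -iotaD nbulE -(count_iota_periodic ess_pos_periodic).
by congr (count _ (iota 0 _)); have := divn_eq (lpos t + d) n; lia.
Qed.

Lemma ess_upto_nadd_mod t d :
  ess_upto (nadd t d) = ess_upto t + ess_window t d %[mod nbul l c].
Proof. by rewrite -ess_upto_nadd [_ + _ * _]addnC modnMDl. Qed.

Lemma ess_window0 t d : (forall u, 0 < u <= d -> ~~ ess (nadd t u)) -> ess_window t d = 0.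
Proof.
move=> Hd; apply/eqP; rewrite -leqn0 leqNgt -has_count; apply/hasP => -[u].
by rewrite mem_iota add1n ltnS => /andP [u_gt0 u_le] /=; apply/negP/Hd; rewrite u_gt0.
Qed.

End EssentialRanks.

Section Runs.
Variable n : nat.

Lemma last_before (E : pred 'I_n) (x b0 : 'I_n) : E b0 ->
  exists b r, [/\ r < n, E b, nadd b r = x & forall u, 0 < u <= r -> ~~ E (nadd b u)].
Proof.
move=> Eb0; have Hn := ord_n_gt0 x.
have exP : exists r, (r < n) && E (nadd x (n - r)).
  exists (cdist b0 x); rewrite cdist_lt -{1}(nadd_cdist b0 x) naddA subnKC ?naddn //.
  exact: ltnW (cdist_lt b0 x).
case: (ex_minnP exP) => r /andP [Hr Eb] Hmin; exists (nadd x (n - r)), r.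
split => //; first by rewrite naddA subnK ?naddn // ltnW.
move=> u Hu; apply/negP => Eu.
have : (r - u < n) && E (nadd x (n - (r - u))).
  rewrite naddA in Eu; have -> : n - (r - u) = n - r + u by lia.
  by rewrite Eu andbT; lia.
by move/Hmin; lia.
Qed.

Lemma flow_run (E f : pred 'I_n) (z : 'I_n -> nat) b r :
  (forall t, f (nsucc t) + z t = E t + f t :> nat) ->
  (forall u, 0 < u <= r -> ~~ E (nadd b u)) ->
  0 < z (nadd b r) -> ~~ f (nsucc (nadd b r)) ->
  forall u, 0 < u <= r -> f (nadd b u).
Proof.
move=> Hflow HE Hz Hf; suff Hrun : forall j, j < r -> f (nadd b (r - j)).
  by move=> u Hu; have := Hrun (r - u); rewrite subKn ?leq_subr; lia.
elim=> [|j IH] Hj.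
  have /negbTE NE : ~~ E (nadd b r) by apply: HE; rewrite Hj leqnn.
  have := Hflow (nadd b r); rewrite NE (negbTE Hf) subn0.
  by case: (f (nadd b r)) => //=; lia.
have /negbTE NE : ~~ E (nadd b (r - j.+1)) by apply: HE; lia.
have Esucc : nsucc (nadd b (r - j.+1)) = nadd b (r - j) by rewrite -nadd_succ subnSK //; lia.
have := Hflow (nadd b (r - j.+1)); rewrite NE Esucc IH 1?ltnW //.
by case: (f _) => //=; lia.
Qed.

Lemma run_end_eq (f : pred 'I_n) b r : 0 < r -> r < n ->
  (forall u, 0 < u <= r -> f (nadd b u)) -> ~~ f (nsucc (nadd b r)) ->
  run_end f b = nadd b r.
Proof.
move=> Hr Hrn Hin Hf; rewrite /run_end (@find_iota _ _ r.-1).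
- by rewrite add1n prednK.
- lia.
- by rewrite prednK // nadd_succ.
- by move=> u Hu; rewrite negbK; apply: Hin; lia.
Qed.

End Runs.

Section RowArcs.
Variables (m n : nat) (A : 'M[nat]_(m, n)) (l : 'I_m -> 'I_n) (k : 'I_m -> nat).
Hypothesis k_range : forall i, 2 <= k i <= n.-1.
Hypothesis A_rows : forall i j, A i j = nat_of_bool (cint_co (l i) (nadd (l i) (k i)) j).
Hypothesis no_dom : forall i i', i != i' -> ~ dominates A i i'.
Variable c : seq (arcT m n).
Hypothesis c_circuit : is_circuit l k c.
Hypothesis no_digon : forall j, ~~ (circ c j && cross c j).

Local Notation atl := (atail l).
Local Notation ahd := (ahead l k).
Local Notation ess := (essential l c).
Local Notation jumpsE := (jumpsE l k_range).
Local Notation ahead_rowE := (ahead_rowE l k_range).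
Local Notation n_gt0 := (circuit_n_gt0 c_circuit).
Local Notation ess_upto := (ess_upto l c n_gt0).
Local Notation ess_rank := (ess_rank l c n_gt0).
Local Notation circ_flow := (circ_flow c_circuit no_digon).
Local Notation cross_flow := (cross_flow c_circuit no_digon).

Lemma count_row_gt0 (P : pred (arcT m n)) i : inl i \in c -> P (inl i) -> 0 < count P c.
Proof. by move=> Hi HP; rewrite -has_count; apply/hasP; exists (inl i). Qed.

Lemma sum_ess : \sum_(t : 'I_n) (ess t : nat) = nbul l c.
Proof.
rewrite /nbul /ebul size_filter.
have /permP -> : perm_eq (rot 1 (enum 'I_n)) (enum 'I_n) by rewrite perm_rot.
by rewrite count_sumE big_enum.
Qed.

Lemma sum_row_tails : \sum_(t : 'I_n) row_tails l c t = count (@is_row m n) c.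
Proof.
rewrite (eq_bigr (fun t => \sum_(f <- c) ((is_row f && (atl f == t)) : nat))); last first.
  by move=> t _; rewrite /row_tails count_sumE.
rewrite exchange_big /= count_sumE; apply: eq_bigr => -[i|f] _ /=; last by rewrite big1.
by rewrite -[RHS](sum_ord_eq1 (atl (inl i))); apply: eq_bigr => t _; rewrite eq_sym.
Qed.

Lemma count_row_nbul : count (@is_row m n) c = nbul l c.
Proof.
pose a := Ordinal (circuit_n_gt0 c_circuit).
rewrite -sum_row_tails -sum_ess (big_nadd _ a) (big_nadd _ a (fun t => ess t : nat)).
by have := telescope_nadd circ_flow a n; rewrite naddn [RHS]addnC => /addnI.
Qed.

Lemma jumps_not_subset i i' : i != i' ->
  ~ (forall j, cdist (l i') j < k i' -> cdist (l i) j < k i).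
Proof.
move=> Hii Hsub; apply: (no_dom Hii) => j; rewrite !A_rows -!/(jumps l k _ j) !jumpsE.
by case: ltnP => // /Hsub ->.
Qed.

Lemma row_tails_inj i i' : inl i \in c -> inl i' \in c -> l i = l i' -> i = i'.
Proof.
move=> Hi Hi' E; have : atl (inl i) = atl (inl i') by rewrite /= E.
by move/(uniq_map_inj_in (circuit_uniq_tails c_circuit) Hi Hi') => -[].
Qed.

(* Non-domination forbids nested row arcs. *)
Lemma jumps_ahead_row i i' : inl i \in c -> inl i' \in c -> i' != i ->
  jumps l k i' (ahd (inl i)) = (0 < cdist (l i) (l i') < k i).
Proof.
move=> Hi Hi' Hne; rewrite jumpsE.
have Hy : cdist (l i) (ahd (inl i)) = (k i).-1 by apply/eqP; rewrite -ahead_rowE.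
have Ha0 : 0 < cdist (l i) (l i').
  rewrite lt0n; apply: contraNneq Hne => Ha0; apply/eqP/(row_tails_inj Hi' Hi).
  by rewrite -(nadd_cdist (l i) (l i')) Ha0 nadd0.
rewrite Ha0 /=; have := k_range i; have := k_range i'.
have := cdist_lt (l i') (ahd (inl i)); have := cdist_trans (l i) (l i') (ahd (inl i)).
rewrite Hy; case: (ltnP (cdist (l i') (ahd (inl i))) (k i')) => Hj';
  case: (ltnP (cdist (l i) (l i')) (k i)) => // Hak *; exfalso.
- apply: (jumps_not_subset Hne) => j Hj.
  by have := cdist_trans (l i) (l i') j; have := cdist_lt (l i') j; lia.
- have Hne' : i != i' by rewrite eq_sym.
  apply: (jumps_not_subset Hne') => j Hj.
  by have := cdist_trans (l i) (l i') j; have := cdist_lt (l i) j; lia.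
Qed.

Definition inner_row i (f : arcT m n) : bool :=
  if f is inl i' then 0 < cdist (l i) (l i') < k i else false.

Lemma njumps_ahead_row i : inl i \in c -> njumps l k c (ahd (inl i)) = 1 + count (inner_row i) c.
Proof.
move=> Hi; rewrite /njumps (@count_addE_in _ _ (pred1 (inl i)) (inner_row i)).
  by rewrite (count_arc c_circuit) Hi.
move=> [i'|f] Hi' //=; case: (eqVneq i' i) => [->|Hne].
  have Hy : cdist (l i) (ahd (inl i)) = (k i).-1 by apply/eqP; rewrite -ahead_rowE.
  by rewrite eqxx cdistnn jumpsE Hy; have := k_range i; lia.
have -> : (inl i' == inl i :> arcT m n) = false by apply/eqP => -[]; apply/eqP.
by rewrite add0n jumps_ahead_row.
Qed.

Lemma sum_row_tails_window a K : K <= n ->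
  \sum_(d < K) row_tails l c (nadd a d) = count (fun f => is_row f && (cdist a (atl f) < K)) c.
Proof.
move=> HK; rewrite (eq_bigr (fun d : 'I_K =>
  \sum_(f <- c) ((is_row f && (atl f == nadd a d)) : nat))); last first.
  by move=> d _; rewrite /row_tails count_sumE.
rewrite exchange_big count_sumE /=; apply: eq_bigr => -[i|f] _ /=; last by rewrite big1.
rewrite -sum_ord_eqn; apply: eq_bigr => d _.
by rewrite eq_nadd_cdist //; exact: leq_trans (ltn_ord d) HK.
Qed.

Lemma count_row_tails_window i :
  count (fun f => is_row f && (cdist (l i) (atl f) < k i)) c =
  count (inner_row i) c + row_tails l c (ahd (inl i)).
Proof.
apply: count_addE_in => -[i'|f] _ //=; rewrite eq_sym ahead_rowE.
have Hn := ord_n_gt0 (l i).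
have := cdist_trans (l i) (l i') (npred (l i')); rewrite /npred cdist_nadd modn_small ?ltn_predL //.
have := k_range i; have := cdist_lt (l i) (l i'); have := cdist_lt (l i) (nadd (l i') n.-1).
move: (cdist (l i) _) (cdist (l i) (l i')) => b a Hb Ha HK T.
by case: (ltnP b (k i)); case: (ltnP 0 a); case: (ltnP a (k i)); case: eqP => /=; lia.
Qed.

Lemma row_tail_circ i : inl i \in c -> circ c (l i) = false.
Proof.
move=> Hi; have := node_out_degree c_circuit (npred (l i)); rewrite npredK.
have : 0 < row_tails l c (npred (l i)) by apply: (count_row_gt0 Hi); rewrite /= eqxx.
by have := node_le1 l c (npred (l i)); case: (circ c (l i)) => //=; lia.
Qed.

Lemma card_ess_jumps (p : int) : (p * Posz n = \sum_(e <- c) alen k e)%R ->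
  forall i, inl i \in c -> Posz #|[pred j | ess j && jumps l k i j]| = p.
Proof.
move=> Hp i Hi; have Hk := ltnW (k_lt_n l k_range i).
rewrite (eq_card (B := [pred j | ess j && (cdist (l i) j < k i)])); last first.
  by move=> j; rewrite !inE jumpsE.
rewrite card_window //; set y := ahd (inl i).
have := njumps_winding k_range c_circuit no_digon Hp y; rewrite njumps_ahead_row //.
have := node_in_degree c_circuit y; have := node_out_degree c_circuit y.
have : 0 < row_heads l k c y by apply: (count_row_gt0 Hi); rewrite /= eqxx.
have := node_le1 l c y; have := telescope_nadd circ_flow (l i) (k i).
have -> : nadd (l i) (k i) = nsucc y by rewrite npredK.
rewrite row_tail_circ // sum_row_tails_window // count_row_tails_window -/y.
lia.
Qed.

Lemma ess_window_row i :
  ess_window l c (npred (l i)) (k i) = #|[pred j | ess j && jumps l k i j]|.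
Proof.
rewrite (eq_card (B := [pred j | ess j && (cdist (l i) j < k i)])); last first.
  by move=> j; rewrite !inE jumpsE.
rewrite card_window; last exact/ltnW/k_lt_n.
rewrite /ess_window (iotaDl 1 0) count_map count_sumE.
rewrite -(subn0 (k i)) -/(index_iota 0 (k i - 0)) big_mkord subn0.
by apply: eq_bigr => d _ /=; rewrite -naddA [nadd (npred _) 1]npredK.
Qed.

Lemma Bminus_row_tail i b r : inl i \in c -> r < n -> nadd b r = atl (inl i) ->
  (forall u, 0 < u <= r -> ~~ ess (nadd b u)) -> Bminus c b = atl (inl i).
Proof.
move=> Hi Hr Ebx Hno; set x := atl (inl i) in Ebx *.
have Hrt : 0 < row_tails l c x by apply: (count_row_gt0 Hi); rewrite /= eqxx.
have Ncx : ~~ circ c (nsucc x).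
  have := node_out_degree c_circuit x; have := node_le1 l c x.
  by case: (circ c _) => //=; lia.
have Crun := flow_run circ_flow Hno; rewrite Ebx in Crun; have {}Crun := Crun Hrt Ncx.
rewrite /Bminus /blockV; case: (posnP r) => [r0|r_gt0].
  by move: Ebx Ncx; rewrite r0 nadd0 => -> /negbTE ->.
have -> : circ c (nsucc b) by apply: Crun; rewrite leqnn.
by rewrite (run_end_eq r_gt0 Hr Crun) // Ebx.
Qed.

Lemma Bplus_row_head i b r : inl i \in c -> r < n -> nadd b r = ahd (inl i) ->
  (forall u, 0 < u <= r -> ~~ ess (nadd b u)) -> Bplus c b = ahd (inl i).
Proof.
move=> Hi Hr Eby Hno; set y := ahd (inl i) in Eby *.
have Hrh : 0 < row_heads l k c y by apply: (count_row_gt0 Hi); rewrite /= eqxx.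
have Ncy : ~~ cross c (nsucc y).
  have := node_in_degree c_circuit y; have := node_le1 l c y.
  by case: (cross c _) => //=; lia.
have Xrun := flow_run cross_flow Hno; rewrite Eby in Xrun; have {}Xrun := Xrun Hrh Ncy.
rewrite /Bplus /blockV; case: (posnP r) => [r0|r_gt0].
  by move: Eby Ncy; rewrite r0 nadd0 => -> /negbTE ->; case: (circ c _).
have Xb : cross c (nsucc b) by apply: Xrun; rewrite leqnn.
have /negbTE -> : ~~ circ c (nsucc b) by have := no_digon (nsucc b); rewrite Xb andbT.
by rewrite Xb (run_end_eq r_gt0 Hr Xrun) // Eby.
Qed.

Lemma ess_upto_row i : ess_upto (ahd (inl i)) =
  ess_upto (atl (inl i)) + #|[pred j | ess j && jumps l k i j]| %[mod nbul l c].
Proof.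
have -> : ahd (inl i) = nadd (atl (inl i)) (k i) by rewrite /= /npred !naddA addnC.
by rewrite ess_upto_nadd_mod ess_window_row.
Qed.

Lemma ess_upto_last_before b r : (forall u, 0 < u <= r -> ~~ ess (nadd b u)) ->
  ess_upto (nadd b r) = ess_upto b %[mod nbul l c].
Proof. by move=> Hno; rewrite ess_upto_nadd_mod ess_window0 ?addn0. Qed.

Lemma row_arc_blocks i : inl i \in c ->
  exists t, [/\ t < nbul l c, atl (inl i) = Bminus c (nth (l i) (ebul l c) t) &
    ahd (inl i) = Bplus c (nth (l i) (ebul l c)
                   ((t + #|[pred j | ess j && jumps l k i j]|) %% nbul l c))].
Proof.
move=> Hi; have s_gt0 : 0 < nbul l c by rewrite -count_row_nbul; apply: (count_row_gt0 Hi).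
have [b0 [Eb0 _ _]] := nth_ebulP n_gt0 (l i) s_gt0.
have [b [r [Hr Eb Ebx Hno]]] := last_before (atl (inl i)) Eb0.
have [b' [r' [Hr' Eb' Eby Hno']]] := last_before (ahd (inl i)) Eb0.
exists (ess_rank b); rewrite nth_ebul_rank ?ess_rank_lt ?(Bminus_row_tail Hi Hr Ebx Hno) //.
suff -> : (ess_rank b + #|[pred j | ess j && jumps l k i j]|) %% nbul l c = ess_rank b'.
  by rewrite nth_ebul_rank ?(Bplus_row_head Hi Hr' Eby Hno').
have Ub : ess_upto b = ess_rank b + 1 by rewrite ess_uptoE Eb.
have Ub' : ess_upto b' = ess_rank b' + 1 by rewrite ess_uptoE Eb'.
have : ess_rank b' + 1 = ess_rank b + #|[pred j | ess j && jumps l k i j]| + 1 %[mod nbul l c].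
  rewrite -Ub' -(ess_upto_last_before Hno') Eby ess_upto_row -Ebx -modnDml.
  by rewrite ess_upto_last_before // modnDml Ub addnAC.
by move/eqP; rewrite eqn_modDr modn_small ?ess_rank_lt // => /eqP ->.
Qed.

Lemma ess_upto_short j : ~~ ess j -> ess_upto j = ess_upto (npred j) %[mod nbul l c].
Proof.
move=> Hj; rewrite -{1}(npredK j) ess_upto_nadd_mod.
by rewrite /ess_window /= [nadd (npred j) 1]npredK (negbTE Hj) !addn0.
Qed.

Lemma ess_upto_arc g : g %| nbul l c ->
  (forall i, inl i \in c -> g %| #|[pred j | ess j && jumps l k i j]|) ->
  forall e, e \in c -> ess_upto (ahd e) = ess_upto (atl e) %[mod g].
Proof.
move=> g_s g_D [i|[j|j]] He /=.
- rewrite -(modn_dvdm (ess_upto _) g_s) ess_upto_row modn_dvdm //.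
  by rewrite -modnDmr (eqP (g_D i He)) addn0.
- have Hj : ~~ ess j by rewrite /essential /bullet /circ He.
  by rewrite -(modn_dvdm (ess_upto j) g_s) ess_upto_short // modn_dvdm.
- have Hj : ~~ ess j by rewrite /essential /bullet /cross He andbF.
  by rewrite -(modn_dvdm (ess_upto j) g_s) ess_upto_short // modn_dvdm.
Qed.

(* Consecutive essential bullets have counters 1 and 2, yet the counter modulo
   [g] is constant along the circuit. *)
Lemma dvdn_nbul_jumps_eq1 g : 0 < nbul l c -> g %| nbul l c ->
  (forall i, inl i \in c -> g %| #|[pred j | ess j && jumps l k i j]|) -> g = 1.
Proof.
move=> s_gt0 g_s g_D; case: (ltngtP (nbul l c) 1) => [|s_gt1|s1].
- by rewrite ltnS leqn0 => /eqP s0; rewrite s0 in s_gt0.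
- pose x0 := Ordinal n_gt0.
  have [b1 [Eb1 Rb1 _]] := nth_ebulP n_gt0 x0 s_gt0.
  have [b2 [Eb2 Rb2 _]] := nth_ebulP n_gt0 x0 s_gt1.
  have := circuit_arc_invariant c_circuit (f := fun t => ess_upto t %% g) (ess_upto_arc g_s g_D).
  move=> /(_ b2 b1 (andP Eb2).2 (andP Eb1).2) /eqP.
  by rewrite !ess_uptoE Eb1 Eb2 Rb1 Rb2 eqn_mod_dvd // dvdn1 => /eqP.
- by apply/eqP; rewrite -dvdn1 -s1.
Qed.

Lemma winding_nbul0 (p : int) : (p * Posz n = \sum_(e <- c) alen k e)%R ->
  nbul l c = 0 -> `|p|%N = 1.
Proof.
move=> Hp s0; have rows0 : count (@is_row m n) c = 0 by rewrite count_row_nbul.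
have njumps0 t : njumps l k c t = 0.
  by apply/eqP; rewrite -leqn0 -rows0; apply: sub_count => -[].
have [e He] : exists e, e \in c.
  by move: (circuit_neq0 c_circuit); case: (c) => // e s _; exists e; rewrite mem_head.
have := njumps_winding k_range c_circuit no_digon Hp.
case: e He => [i Hi _|[j|j] He /(_ j)].
- by have := count_row_gt0 (P := @is_row m n) Hi isT; rewrite rows0.
- have Cj : circ c j by [].
  have /negbTE Xj : ~~ cross c j by have := no_digon j; rewrite Cj.
  by rewrite njumps0 Cj Xj => <-.
- have Xj : cross c j by [].
  have /negbTE Cj : ~~ circ c j by have := no_digon j; rewrite Xj andbT.
  by rewrite njumps0 Cj Xj => <-.
Qed.

End RowArcs.

Theorem lemma7p2 (m n : nat) (A : 'M[nat]_(m, n))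
  (l : 'I_m -> 'I_n) (k : 'I_m -> nat)
  (Hk : forall i, 2 <= k i <= n.-1)
  (HA : forall i j, A i j = nat_of_bool (cint_co (l i) (nadd (l i) (k i)) j))
  (Hnodom : forall i i', i != i' -> ~ dominates A i i')
  (c : seq (arcT m n)) (Hc : is_circuit l k c)
  (Hnodigon : forall j, ~~ (circ c j && cross c j))
  (p : int) (Hp : (p * Posz n = \sum_(e <- c) alen k e)%R) :
  count (@is_row m n) c = nbul l c /\
  (forall i, rowA n i \in c ->
     Posz #|[pred j | essential l c j && jumps l k i j]| = p /\
     exists t, t < nbul l c /\
       atail l (rowA n i) = Bminus c (nth (l i) (ebul l c) t) /\
       ahead l k (rowA n i) =
         Bplus c (nth (l i) (ebul l c) `|((Posz t + p) %% Posz (nbul l c))%Z|%N)) /\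
  gcdn (nbul l c) `|p|%N = 1.
Proof.
have rows := count_row_nbul Hc Hnodigon.
have jumps_p := card_ess_jumps Hk HA Hnodom Hc Hnodigon Hp.
split=> //; split=> [i Hi|].
  split; first exact: jumps_p.
  have [t [Ht Htail Hhead]] := row_arc_blocks Hk Hc Hnodigon Hi.
  by exists t; rewrite -(jumps_p i Hi) -PoszD modz_nat absz_nat.
case: (posnP (nbul l c)) => [s0|s_gt0].
  by rewrite s0 gcd0n (winding_nbul0 Hk Hc Hnodigon Hp).
have /hasP [[i|//] Hi _] : has (@is_row m n) c by rewrite has_count rows.
rewrite -(jumps_p i Hi) absz_nat; apply: (dvdn_nbul_jumps_eq1 Hk Hc s_gt0 (dvdn_gcdl _ _)).
by move=> i' Hi'; have := jumps_p i' Hi'; rewrite -(jumps_p i Hi) => -[->]; apply: dvdn_gcdr.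
Qed.
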